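(* Let $n\geq1$. Let $s$ be defined on the generators of $P_n(\mathbb{K})$ by $s(a_i)=a_i$, $s(b_i)=b_i$ for $1\leq i\leq n-1$; $s(C_{i,j})=C_{i,j}$ for $1\leq i<j\leq n-1$; $s(C_{i,n})=C_{i,n}C_{i,n+1}C_{n,n+1}^{-1}$ for $1\leq i\leq n-1$; $s(a_n)=a_na_{n+1}$; $s(b_n)=b_{n+1}b_n$ (images in $P_{n+1}(\mathbb{K})$). Then $s$ extends to a homomorphism $s\colon P_n(\mathbb{K})\to P_{n+1}(\mathbb{K})$ with $p_*\circ s=\mathrm{id}$, where $p_*\colon P_{n+1}(\mathbb{K})\to P_n(\mathbb{K})$ is the homomorphism forgetting the last string; hence $s$ is a section of the Fadell–Neuwirth short exact sequence $1\to\pi_1(\mathbb{K}\setminus\{x_1,\ldots,x_n\})\to P_{n+1}(\mathbb{K})\xrightarrow{p_*}P_n(\mathbb{K})\to1$.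
   Context: $\mathbb{K}$ is the Klein bottle and $P_m(\mathbb{K})$ its $m$-string pure braid group, which has the presentation: generators $a_i,b_i$ ($1\leq i\leq m$), $C_{i,j}$ ($1\leq i<j\leq m$), with the convention $C_{i,i}=1$; relations (all indices in $\{1,\ldots,m\}$): (1) $a_ia_j=a_ja_i$ ($i<j$); (2) $a_i^{-1}b_ja_i=b_ja_jC_{i,j}^{-1}C_{i+1,j}a_j^{-1}$ ($i<j$); (3) $a_i^{-1}C_{j,k}a_i=C_{j,k}$ if $i<j<k$ or $j<k<i$, and $=a_kC_{i+1,k}^{-1}C_{i,k}a_k^{-1}C_{j,k}C_{i,k}^{-1}C_{i+1,k}$ if $j\leq i<k$; (4) $C_{i,l}^{-1}C_{j,k}C_{i,l}=C_{j,k}$ if $i<l<j<k$ or $j\leq i<l<k$, and $=C_{i,k}C_{l+1,k}^{-1}C_{l,k}C_{i,k}^{-1}C_{j,k}C_{l,k}^{-1}C_{l+1,k}$ if $i<j\leq l<k$; (5) $\prod_{j=i+1}^{m}C_{i,j}C_{i+1,j}^{-1}=b_iC_{1,i}a_i^{-1}b_i^{-1}a_i^{-1}$ ($1\leq i\leq m$); (6) $b_jb_i=b_ib_jC_{i,j}C_{i+1,j}^{-1}$ ($i<j$); (7) $b_i^{-1}a_jb_i=a_jb_j(C_{i,j}C_{i+1,j}^{-1})^{-1}b_j^{-1}$ ($i<j$); (8) $b_i^{-1}C_{j,k}b_i=C_{j,k}$ if $i<j<k$ or $j<k<i$, and $=C_{i+1,k}C_{i,k}^{-1}C_{j,k}b_k(C_{i,k}C_{i+1,k}^{-1})^{-1}b_k^{-1}$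 if $j\leq i<k$. Here $a_i$ (resp. $b_i$) moves only the $i$-th point once across one (resp. the other) side of the square model of $\mathbb{K}$, and $C_{i,j}$ moves only the $j$-th point around the points $i,\ldots,j-1$. The homomorphism $p_*$ is given on generators of $P_{n+1}(\mathbb{K})$ by $a_{n+1},b_{n+1},C_{i,n+1}\mapsto1$ and fixing all other generators. *)

From mathcomp Require Import all_boot.
Set Implicit Arguments. Unset Strict Implicit. Unset Printing Implicit Defensive.

Inductive letter : Type := La of nat | Lb of nat | LC of nat & nat.

(* A word in the free group: a list of (letter, inverted?) pairs. *)
Definition word := seq (letter * bool).

Definition winv (w : word) : word := rev (map (fun p => (p.1, ~~ p.2)) w).

Definition a (i : nat) : word := [:: (La i, false)].
Definition b (i : nat) : word := [:: (Lb i, false)].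
(* C_{i,j}, with the convention C_{i,i} = 1. *)
Definition C (i j : nat) : word := if i == j then [::] else [:: (LC i j, false)].

Definition valid_letter (m : nat) (x : letter) : bool :=
  match x with
  | La i => (1 <= i <= m)
  | Lb i => (1 <= i <= m)
  | LC i j => [&& 1 <= i, i < j & j <= m]
  end.
Definition valid_word (m : nat) (w : word) : bool :=
  all (fun p => valid_letter m p.1) w.

Inductive prel (m : nat) : word -> word -> Prop :=
| R1 i j : 1 <= i -> i < j -> j <= m ->
    prel m (a i ++ a j) (a j ++ a i)
| R2 i j : 1 <= i -> i < j -> j <= m ->
    prel m (winv (a i) ++ b j ++ a i)
           (b j ++ a j ++ winv (C i j) ++ C i.+1 j ++ winv (a j))
| R3a i j k : 1 <= i <= m -> 1 <= j -> j < k -> k <= m ->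
    ((i < j < k) || (k < i)) ->
    prel m (winv (a i) ++ C j k ++ a i) (C j k)
| R3b i j k : 1 <= j -> j <= i -> i < k -> k <= m ->
    prel m (winv (a i) ++ C j k ++ a i)
           (a k ++ winv (C i.+1 k) ++ C i k ++ winv (a k) ++ C j k
                ++ winv (C i k) ++ C i.+1 k)
| R4a i l j k : 1 <= i -> i < l -> 1 <= j -> j < k -> k <= m ->
    ((l < j) || ((j <= i) && (l < k))) ->
    prel m (winv (C i l) ++ C j k ++ C i l) (C j k)
| R4b i l j k : 1 <= i -> i < j -> j <= l -> l < k -> k <= m ->
    prel m (winv (C i l) ++ C j k ++ C i l)
           (C i k ++ winv (C l.+1 k) ++ C l k ++ winv (C i k) ++ C j k
                ++ winv (C l k) ++ C l.+1 k)
| R5 i : 1 <= i <= m ->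
    prel m (flatten [seq C i j ++ winv (C i.+1 j) | j <- iota i.+1 (m - i)])
           (b i ++ C 1 i ++ winv (a i) ++ winv (b i) ++ winv (a i))
| R6 i j : 1 <= i -> i < j -> j <= m ->
    prel m (b j ++ b i) (b i ++ b j ++ C i j ++ winv (C i.+1 j))
| R7 i j : 1 <= i -> i < j -> j <= m ->
    prel m (winv (b i) ++ a j ++ b i)
           (a j ++ b j ++ winv (C i j ++ winv (C i.+1 j)) ++ winv (b j))
| R8a i j k : 1 <= i <= m -> 1 <= j -> j < k -> k <= m ->
    ((i < j < k) || (k < i)) ->
    prel m (winv (b i) ++ C j k ++ b i) (C j k)
| R8b i j k : 1 <= j -> j <= i -> i < k -> k <= m ->
    prel m (winv (b i) ++ C j k ++ b i)
           (C i.+1 k ++ winv (C i k) ++ C j k ++ b k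
                ++ winv (C i k ++ winv (C i.+1 k)) ++ winv (b k)).

Inductive eqv (m : nat) : word -> word -> Prop :=
| eqv_refl w : eqv m w w
| eqv_sym w w' : eqv m w w' -> eqv m w' w
| eqv_trans w1 w2 w3 : eqv m w1 w2 -> eqv m w2 w3 -> eqv m w1 w3
| eqv_ctx u v w w' : eqv m w w' -> eqv m (u ++ w ++ v) (u ++ w' ++ v)
| eqv_cancel x e : eqv m [:: (x, e); (x, ~~ e)] [::]
| eqv_rel w w' : prel m w w' -> eqv m w w'.

Definition wmap (f : letter -> word) (w : word) : word :=
  flatten [seq if p.2 then winv (f p.1) else f p.1 | p <- w].

Definition s_letter (n : nat) (x : letter) : word :=
  match x with
  | La i => if i == n then a n ++ a n.+1 else a i
  | Lb i => if i == n then b n.+1 ++ b n else b i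
  | LC i j => if j == n then C i n ++ C i n.+1 ++ winv (C n n.+1) else C i j
  end.

Definition p_letter (n : nat) (x : letter) : word :=
  match x with
  | La i => if i == n.+1 then [::] else a i
  | Lb i => if i == n.+1 then [::] else b i
  | LC i j => if j == n.+1 then [::] else C i j
  end.

Definition s_word (n : nat) := wmap (s_letter n).
Definition p_word (n : nat) := wmap (p_letter n).

(* The strings 1..n-1 are untouched by s and strings n, n+1 travel together,
   so s maps a relation l = r of P_n(K) to a pair of words which, in
   P_{n+1}(K), have the form s(l) = l F and s(r) = r F' with F, F' in the
   free fibre group generated by a_{n+1}, b_{n+1} and the C_{j,n+1}.  Since
   l = r also holds in P_{n+1}(K), it suffices to check F = F'.  The fibre
   part is computed by pushing fibre letters to the right past the other
   generators, using the conjugation action read off from the relations.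
   As each relation other than (5) involves only a bounded number of
   indices, it is checked once and for all on a word over "positions"
   1..T, which are then relabelled by an increasing map onto the indices
   actually occurring; in relation (5) only the last factors of the product
   are moved by s. *)

From HB Require Import structures.
From mathcomp Require Import all_boot zify.
Set Implicit Arguments. Unset Strict Implicit. Unset Printing Implicit Defensive.

Definition letter_eqb (x y : letter) : bool :=
  match x, y with
  | La i, La k | Lb i, Lb k => i == k
  | LC i j, LC k l => (i == k) && (j == l)
  | _, _ => false
  end.

Lemma letter_eqP : Equality.axiom letter_eqb.
Proof.
case=> [i|i|i j] [k|k|k l] /=; try by constructor.
- by apply: (iffP eqP) => [->|[]].
- by apply: (iffP eqP) => [->|[]].
- by apply: (iffP andP) => [[/eqP-> /eqP->]|[-> ->]].
Qed.

HB.instance Definition _ := hasDecEq.Build letter letter_eqP.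

Lemma C_ne i j : i != j -> C i j = [:: (LC i j, false)].
Proof. by rewrite /C => /negbTE ->. Qed.

Lemma C_id i : C i i = [::].
Proof. by rewrite /C eqxx. Qed.

Lemma winv_cat u v : winv (u ++ v) = winv v ++ winv u.
Proof. by rewrite /winv map_cat rev_cat. Qed.

Lemma winvK : involutive winv.
Proof.
move=> w; rewrite /winv map_rev revK -map_comp.
by elim: w => [|[x e] w /= ->]; rewrite ?negbK.
Qed.

Section FreeGroup.
Variable m : nat.
Local Notation E := (eqv m).

Lemma eqv_catl u v v' : E v v' -> E (u ++ v) (u ++ v').
Proof. by move=> H; have := eqv_ctx u [::] H; rewrite !cats0. Qed.

Lemma eqv_catr u u' v : E u u' -> E (u ++ v) (u' ++ v).
Proof. by move=> H; have := eqv_ctx [::] v H. Qed.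

Lemma eqv_mulV w : E (w ++ winv w) [::].
Proof.
elim: w => [|[x e] w IH]; first exact: eqv_refl.
rewrite -cat1s winv_cat -catA [w ++ _]catA.
exact: eqv_trans (eqv_ctx [:: (x, e)] [:: (x, ~~ e)] IH) (eqv_cancel m x e).
Qed.

Lemma eqv_mulVg w : E (winv w ++ w) [::].
Proof. by have := eqv_mulV (winv w); rewrite winvK. Qed.

Lemma eqv_push_conj x g y : E (winv g ++ x ++ g) y -> E (x ++ g) (g ++ y).
Proof.
move=> H; apply: eqv_trans _ (eqv_catl g H).
rewrite [g ++ _]catA -{1}[x ++ g]cat0s; apply: eqv_catr; apply: eqv_sym; exact: eqv_mulV.
Qed.

Lemma eqv_push_winv x g y : E (x ++ g) (g ++ y) -> E (winv x ++ g) (g ++ winv y).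
Proof.
move=> H.
have E1 : E (winv x ++ g) (winv x ++ (g ++ y) ++ winv y).
  rewrite -catA catA -{1}[winv x ++ g]cats0; apply/eqv_catl/eqv_sym; exact: eqv_mulV.
have E2 : E (winv x ++ (x ++ g) ++ winv y) (g ++ winv y).
  rewrite -catA catA -[X in E _ X]cat0s; apply: eqv_catr; exact: eqv_mulVg.
exact: eqv_trans E1 (eqv_trans (eqv_catl _ (eqv_catr _ (eqv_sym H))) E2).
Qed.

Lemma eqv_push_winvg x g y : E (x ++ g) (g ++ y) -> E (y ++ winv g) (winv g ++ x).
Proof.
move=> H.
have E1 : E (y ++ winv g) (winv g ++ (g ++ y) ++ winv g).
  rewrite -catA catA -{1}[y ++ winv g]cat0s; apply/eqv_catr/eqv_sym; exact: eqv_mulVg.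
have E2 : E (winv g ++ (x ++ g) ++ winv g) (winv g ++ x).
  rewrite -!catA -{2}[x]cats0; do 2 apply: eqv_catl; exact: eqv_mulV.
exact: eqv_trans E1 (eqv_trans (eqv_catl _ (eqv_catr _ (eqv_sym H))) E2).
Qed.

End FreeGroup.

Lemma wmap_cat h u v : wmap h (u ++ v) = wmap h u ++ wmap h v.
Proof. by rewrite /wmap map_cat flatten_cat. Qed.

Lemma wmap_winv h w : wmap h (winv w) = winv (wmap h w).
Proof.
elim: w => [|[x e] w IH] //.
rewrite -cat1s winv_cat !wmap_cat IH winv_cat; congr (_ ++ _).
by case: e; rewrite /wmap /= ?cats0 ?winvK.
Qed.

Lemma wmap_comp h k w : wmap k (wmap h w) = wmap (fun x => wmap k (h x)) w.
Proof.
elim: w => [|[x e] w IH] //.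
by rewrite -cat1s !wmap_cat IH; case: e; rewrite /wmap /= !cats0 -?wmap_winv.
Qed.

Lemma eq_in_wmap (P : pred letter) h k w :
  (forall x, P x -> h x = k x) -> all (fun y => P y.1) w -> wmap h w = wmap k w.
Proof.
move=> hk; elim: w => [|[x e] w IH] //= /andP[Px Pw].
by rewrite -cat1s !wmap_cat IH // /wmap /= hk.
Qed.

Lemma wmap_letter w : wmap (fun x => [:: (x, false)]) w = w.
Proof. by elim: w => [|[x []] w IH] //; rewrite -cat1s wmap_cat IH. Qed.

Lemma wmap_letter1 h x : wmap h [:: (x, false)] = h x.
Proof. by rewrite /wmap /= cats0. Qed.

Lemma eqv_wmap_cancel m h x e : eqv m (wmap h [:: (x, e); (x, ~~ e)]) [::].
Proof.
rewrite /wmap /= cats0; case: e => /=; last exact: eqv_mulV.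
by have := eqv_mulV m (winv (h x)); rewrite winvK.
Qed.

Lemma eqv_wmap m m' h :
  (forall w w', prel m w w' -> eqv m' (wmap h w) (wmap h w')) ->
  forall w w', eqv m w w' -> eqv m' (wmap h w) (wmap h w').
Proof.
move=> hrel w w'; elim=> {w w'}.
- by move=> w; apply: eqv_refl.
- by move=> w w' _; apply: eqv_sym.
- by move=> w1 w2 w3 _ H12 _ H23; apply: eqv_trans H12 H23.
- by move=> u v w w' _ H; rewrite !wmap_cat; apply: eqv_ctx.
- exact: eqv_wmap_cancel.
- exact: hrel.
Qed.

Lemma p_s_letter n x : valid_letter n x -> wmap (p_letter n) (s_letter n x) = [:: (x, false)].
Proof.
have ne_n i : i <= n -> (i == n.+1) = false by move=> ?; apply/eqP; lia.
case: x => [i|i|i j] /=.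
- by case: eqP => [->|_] /andP[_ hi]; rewrite /wmap /= ?eqxx ne_n.
- by case: eqP => [->|_] /andP[_ hi]; rewrite /wmap /= ?eqxx ne_n.
- case/and3P=> hi hij hj; rewrite (C_ne (_ : i != j)); last by lia.
  case: eqP => [ej|_]; last by rewrite /wmap /= ne_n // C_ne //; lia.
  rewrite ej !C_ne; try lia.
  by rewrite /wmap /= eqxx ne_n // -ej C_ne //; lia.
Qed.

Lemma p_word_s_word n w : valid_word n w -> p_word n (s_word n w) = w.
Proof.
move=> wv; rewrite /p_word /s_word wmap_comp -[RHS]wmap_letter.
by apply: (eq_in_wmap (P := valid_letter n)) wv => x; apply: p_s_letter.
Qed.

Lemma valid_word_cat m u v : valid_word m (u ++ v) = valid_word m u && valid_word m v.
Proof. exact: all_cat. Qed.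

Lemma valid_word_winv m w : valid_word m (winv w) = valid_word m w.
Proof. by rewrite /valid_word /winv all_rev all_map. Qed.

Lemma valid_word_C m i j : valid_word m (C i j) = (i == j) || [&& 1 <= i, i < j & j <= m].
Proof. by rewrite /C; case: eqP => //= _; rewrite andbT. Qed.

Lemma valid_word_r5_lhs m i j k : 1 <= i -> i < j -> j + k <= m.+1 ->
  valid_word m (flatten [seq C i l ++ winv (C i.+1 l) | l <- iota j k]).
Proof.
move=> hi; elim: k j => [|k IH] j hij hjk //=.
rewrite valid_word_cat IH; try lia.
rewrite valid_word_cat valid_word_winv !valid_word_C andbT; lia.
Qed.

Lemma prel_valid m w w' : prel m w w' -> valid_word m w && valid_word m w'.
Proof.
case=> *; rewrite ?valid_word_r5_lhs ?(valid_word_cat, valid_word_winv, valid_word_C) /= ?andbT;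
  lia.
Qed.

(* Letters of the free fibre group of P_m(K) -> P_{m-1}(K), and the word in
   these letters for the conjugate g^-1 x g of a fibre letter x by a generator
   g of P_{m-1}(K), read off from relations (1)-(4) and (6)-(8). *)
Definition fibre_letter (m : nat) (x : letter) : bool :=
  match x with
  | La j | Lb j => j == m
  | LC i j => (0 < i < m) && (j == m)
  end.

Definition conj_fibre (m : nat) (g x : letter) : word :=
  match g, x with
  | La i, La _ => a m
  | La i, Lb _ => b m ++ a m ++ winv (C i m) ++ C i.+1 m ++ winv (a m)
  | La i, LC j _ =>
      if i < j then C j m else
      a m ++ winv (C i.+1 m) ++ C i m ++ winv (a m) ++ C j m ++ winv (C i m) ++ C i.+1 m
  | Lb i, La _ => a m ++ b m ++ winv (C i m ++ winv (C i.+1 m)) ++ winv (b m)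
  | Lb i, Lb _ => b m ++ C i m ++ winv (C i.+1 m)
  | Lb i, LC j _ =>
      if i < j then C j m else
      C i.+1 m ++ winv (C i m) ++ C j m ++ b m ++ winv (C i m ++ winv (C i.+1 m)) ++ winv (b m)
  | LC _ _, La _ => a m
  | LC _ _, Lb _ => b m
  | LC i q, LC j _ =>
      if (q < j) || (j <= i) then C j m else
      C i m ++ winv (C q.+1 m) ++ C q m ++ winv (C i m) ++ C j m ++ winv (C q m) ++ C q.+1 m
  end.

(* A candidate for g x g^-1; it is never proved correct, the decomposition
   below checks on each instance that conj_fibre undoes it. *)
Definition conj_fibre_inv (m : nat) (g x : letter) : word :=
  match g, x with
  | La i, La _ => a m
  | La i, Lb _ => b m ++ C i m ++ winv (C i.+1 m)
  | La i, LC j _ =>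
      if i < j then C j m else
      C i.+1 m ++ winv (C i m) ++ C j m ++ winv (a m) ++ C i m ++ winv (C i.+1 m) ++ a m
  | Lb i, La _ => a m ++ winv (C i m) ++ C i.+1 m
  | Lb i, Lb _ => winv (C i.+1 m) ++ C i m ++ b m
  | Lb i, LC j _ =>
      if i < j then C j m else
      winv (b m) ++ winv (C i m) ++ C i.+1 m ++ b m ++ C j m ++ winv (C i m) ++ C i.+1 m
  | LC _ _, La _ => a m
  | LC _ _, Lb _ => b m
  | LC i q, LC j _ =>
      if (q < j) || (j <= i) then C j m else
      C q.+1 m ++ winv (C q m) ++ C j m ++ winv (C i m) ++ C q m ++ winv (C q.+1 m) ++ C i m
  end.

(* conj_fibre m g x mentions the successor of succ_index g exactly when
   uses_succ g x holds. *)
Definition succ_index (g : letter) : nat :=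
  match g with La i | Lb i => i | LC _ q => q end.

Definition uses_succ (g x : letter) : bool :=
  match g, x with
  | La _, La _ | LC _ _, La _ | LC _ _, Lb _ => false
  | La i, LC j _ | Lb i, LC j _ => j <= i
  | LC i q, LC j _ => (i < j) && (j <= q)
  | _, _ => true
  end.

Lemma eqv_conj_fibre m g x : valid_letter m.-1 g -> fibre_letter m x ->
  eqv m ([:: (x, false)] ++ [:: (g, false)]) ([:: (g, false)] ++ conj_fibre m g x).
Proof.
have rel w w' : prel m w w' -> eqv m w w' by apply: eqv_rel.
have push x' g' y : prel m (winv g' ++ x' ++ g') y -> eqv m (x' ++ g') (g' ++ y).
  by move=> r; apply/eqv_push_conj/rel.
case: g => [i|i|i q] hg; case: x => [j|j|j k] hx; move: hx hg;
  rewrite [fibre_letter _ _]/= [valid_letter _ _]/= [conj_fibre _ _ _]/=.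
- by move=> /eqP-> hi; apply/eqv_sym/rel/R1; lia.
- by move=> /eqP-> hi; apply: (push (b m)); apply: R2; lia.
- case/andP=> /andP[hj hjm] /eqP-> hi; rewrite -(C_ne (_ : j != m)); last by lia.
  by case: ifP => hij; apply: push; [apply: R3a | apply: R3b]; lia.
- by move=> /eqP-> hi; apply: (push (a m)); apply: R7; lia.
- by move=> /eqP-> hi; apply/rel/R6; lia.
- case/andP=> /andP[hj hjm] /eqP-> hi; rewrite -(C_ne (_ : j != m)); last by lia.
  by case: ifP => hij; apply: push; [apply: R8a | apply: R8b]; lia.
- move=> /eqP-> hiq; rewrite -(C_ne (_ : i != q)); last by lia.
  by apply/eqv_sym/push; apply: R3a; lia.
- move=> /eqP-> hiq; rewrite -(C_ne (_ : i != q)); last by lia.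
  by apply/eqv_sym/push; apply: R8a; lia.
- case/andP=> /andP[hj hjm] /eqP-> hiq.
  rewrite -(C_ne (_ : j != m)) -?(C_ne (_ : i != q)); try lia.
  by case: ifP => hc; apply: push; [apply: R4a | apply: R4b]; lia.
Qed.

Lemma eqv_push_wmap m g h phi F :
  {in [seq y.1 | y <- F], forall x, eqv m (h x ++ g) (g ++ phi x)} ->
  eqv m (wmap h F ++ g) (g ++ wmap phi F).
Proof.
elim: F => [|[x e] F IH] hF; first by rewrite cats0; apply: eqv_refl.
have hx := hF x (mem_head _ _).
have {}IH : eqv m (wmap h F ++ g) (g ++ wmap phi F).
  by apply: IH => y hy; apply: hF; rewrite /= inE hy orbT.
rewrite -cat1s !wmap_cat -catA; apply: eqv_trans (eqv_catl _ IH) _.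
rewrite !catA; apply: eqv_catr.
by case: e {hF}; rewrite /wmap /= !cats0 //; apply: eqv_push_winv.
Qed.

Fixpoint reduce (w : word) : word :=
  if w is y :: w' then
    if reduce w' is z :: r then (if z == (y.1, ~~ y.2) then r else y :: z :: r) else [:: y]
  else [::].

Lemma eqv_wmap_reduce m h w : eqv m (wmap h w) (wmap h (reduce w)).
Proof.
elim: w => [|y w IH] /=; first exact: eqv_refl.
rewrite -cat1s wmap_cat; apply: eqv_trans (eqv_catl _ IH) _.
case: (reduce w) => [|z r]; first by rewrite cats0; apply: eqv_refl.
case: eqP => [->|_]; last by rewrite -wmap_cat; apply: eqv_refl.
rewrite -[_ :: r]cat1s wmap_cat catA -wmap_cat -[X in eqv _ _ X]cat0s.
apply: eqv_catr; case: y => x e; exact: eqv_wmap_cancel.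
Qed.

(* A state (P, F, ok) of the decomposition stands for the word P F, with F in
   fibre letters; a base letter is moved in front of F by rewriting F with the
   conjugation action, and ok records that each such move was justified. *)
Definition pushable (T : nat) (succs : seq nat) (g : letter) (F : word) : bool :=
  all (fun y => fibre_letter T y.1 && (uses_succ g y.1 ==> (succ_index g \in succs))) F.

Definition decomp_step (T : nat) (succs : seq nat) (st : word * word * bool) (y : letter * bool) :=
  let: (P, F, ok) := st in
  let: (g, e) := y in
  if fibre_letter T g then (P, reduce (rcons F y), ok)
  else if e then
    let F' := reduce (wmap (conj_fibre_inv T g) F) in
    (rcons P y, F', [&& ok, valid_letter T.-1 g, pushable T succs g F'
                      & reduce (wmap (conj_fibre T g) F') == reduce F])
  else
    (rcons P y, reduce (wmap (conj_fibre T g) F),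
     [&& ok, valid_letter T.-1 g & pushable T succs g F]).

Definition decomp (T : nat) (succs : seq nat) (w : word) : word * word * bool :=
  foldl (decomp_step T succs) ([::], [::], true) w.

Definition s_fibre (T : nat) (succs : seq nat) (w : word) : option word :=
  let: (P, F, ok) := decomp T succs (s_word T.-1 w) in
  if ok && (P == w) then Some F else None.

Definition relabel (f : nat -> nat) (x : letter) : letter :=
  match x with La i => La (f i) | Lb i => Lb (f i) | LC i j => LC (f i) (f j) end.

Definition wrelabel (f : nat -> nat) : word -> word := wmap (fun x => [:: (relabel f x, false)]).

Lemma wrelabel_cat f u v : wrelabel f (u ++ v) = wrelabel f u ++ wrelabel f v.
Proof. exact: wmap_cat. Qed.

Lemma wrelabel_winv f w : wrelabel f (winv w) = winv (wrelabel f w).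
Proof. exact: wmap_winv. Qed.

Lemma wrelabel_a f i : wrelabel f (a i) = a (f i).
Proof. by []. Qed.

Lemma wrelabel_b f i : wrelabel f (b i) = b (f i).
Proof. by []. Qed.

Lemma sorted_nth_lt (ix : seq nat) p q :
  sorted ltn ix -> p < q -> q < size ix -> nth 0 ix p < nth 0 ix q.
Proof. by move=> ix_sorted pq qs; apply: (sorted_ltn_nth ltn_trans) => //; rewrite inE; lia. Qed.

(* Position p stands for the index nth 0 ix p; the head of ix is a dummy 0,
   so that positions, like indices, start at 1. *)
Section Positions.
Variable ix : seq nat.
Hypothesis ix_sorted : sorted ltn ix.
Variable succs : seq nat.
Hypothesis succsP : all (fun p => nth 0 ix p.+1 == (nth 0 ix p).+1) succs.

Local Notation f := (nth 0 ix).
Local Notation T := (size ix).-1.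
Local Notation rl := (wrelabel f).

Lemma pos_ltE p q : p <= T -> q <= T -> (f p < f q) = (p < q).
Proof.
move=> hp hq; case: (ltngtP p q) => [pq|qp|->]; last by rewrite ltnn.
- by rewrite sorted_nth_lt //; lia.
- by have := sorted_nth_lt ix_sorted qp (_ : p < size ix); lia.
Qed.

Lemma pos_leE p q : p <= T -> q <= T -> (f p <= f q) = (p <= q).
Proof. by move=> hp hq; rewrite leqNgt pos_ltE // -leqNgt. Qed.

Lemma pos_eqE p q : p <= T -> q <= T -> (f p == f q) = (p == q).
Proof. by move=> hp hq; rewrite !eqn_leq !pos_leE. Qed.

Lemma pos_ge p : p <= T -> p <= f p.
Proof.
elim: p => [|p IH] hp //.
by move: (pos_ltE (ltnW hp) hp); rewrite ltnSn; have := IH (ltnW hp); lia.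
Qed.

Lemma wrelabel_C i j : i <= T -> j <= T -> rl (C i j) = C (f i) (f j).
Proof. by move=> hi hj; rewrite /C pos_eqE //; case: eqP. Qed.

Lemma succ_pos p : p \in succs -> f p.+1 = (f p).+1.
Proof. by move=> hp; apply/eqP; exact: (allP succsP). Qed.

Lemma valid_relabel x : valid_letter T.-1 x -> valid_letter (f T).-1 (relabel f x).
Proof.
have fT p : 0 < p <= T.-1 -> 0 < f p <= (f T).-1.
  move=> hp; have ge := pos_ge (_ : p <= T).
  have lt : f p < f T by rewrite pos_ltE; lia.
  lia.
case: x => [i|i|i j] /=; try by move/fT.
case/and3P=> hi hij hj; have := fT j; have := fT i.
have : f i < f j by rewrite pos_ltE; lia.
lia.
Qed.

Lemma fibre_relabel x : fibre_letter T x -> fibre_letter (f T) (relabel f x).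
Proof.
case: x => [j|j|i j] /=; try by move=> /eqP->.
case/andP=> /andP[hi hiT] /eqP->; rewrite eqxx pos_ltE //; last by lia.
by have := pos_ge (_ : i <= T); lia.
Qed.

Lemma wrelabel_conj_fibre g x : valid_letter T.-1 g -> fibre_letter T x ->
  (uses_succ g x -> succ_index g \in succs) ->
  rl (conj_fibre T g x) = conj_fibre (f T) (relabel f g) (relabel f x).
Proof.
case: g => [i|i|i q] hg; case: x => [j|j|j k] hx hs; move: hg hx hs;
  rewrite [valid_letter _ _]/= [fibre_letter _ _]/= [uses_succ _ _]/= [succ_index _]/=;
  rewrite /conj_fibre /relabel => hg hx hs; rewrite ?pos_ltE ?pos_leE; try lia.
all: try case: ifP => c.
all: rewrite ?(wrelabel_cat, wrelabel_winv, wrelabel_a, wrelabel_b) ?wrelabel_C ?succ_pos //;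
  try lia.
all: apply: hs; lia.
Qed.

Lemma eqv_push_fibre g F : valid_letter T.-1 g -> pushable T succs g F ->
  eqv (f T) (rl F ++ rl [:: (g, false)]) (rl [:: (g, false)] ++ rl (wmap (conj_fibre T g) F)).
Proof.
move=> hg hF; rewrite (_ : rl [:: (g, false)] = [:: (relabel f g, false)]) //.
rewrite [rl (wmap _ F)]wmap_comp; apply: eqv_push_wmap => x /mapP[[y e] /= yF ->{x}].
have /andP[hy hs] := allP hF _ yF.
have := eqv_conj_fibre (valid_relabel hg) (fibre_relabel hy).
by rewrite -wrelabel_conj_fibre //; apply/implyP.
Qed.

Lemma decomp_step_sound P F ok y :
  let: (P', F', ok') := decomp_step T succs (P, F, ok) y in
  ok' -> ok /\ eqv (f T) (rl (P ++ F ++ [:: y])) (rl (P' ++ F')).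
Proof.
case: y => g e /=; case: ifP => hg.
  move=> hok; split=> //; rewrite !(wrelabel_cat _ P); apply: eqv_catl.
  rewrite cats1; exact: eqv_wmap_reduce.
case: e => /=; rewrite -cats1 !wrelabel_cat -!catA.
- case/and4P=> hok hv hF' hred; split=> //; apply: eqv_catl.
  set F' := reduce _ in hF' hred *.
  have E1 := eqv_push_fibre hv hF'.
  have E2 : eqv (f T) (rl (wmap (conj_fibre T g) F')) (rl F).
    apply: eqv_trans (eqv_wmap_reduce _ _ _) _; rewrite (eqP hred).
    apply: eqv_sym; exact: eqv_wmap_reduce.
  have := eqv_push_winvg (eqv_trans E1 (eqv_catl _ E2)).
  by rewrite -wrelabel_winv; apply.
- case/and3P=> hok hv hF; split=> //; apply: eqv_catl.
  apply: eqv_trans (eqv_push_fibre hv hF) _; apply: eqv_catl; exact: eqv_wmap_reduce.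
Qed.

Lemma decomp_sound_from w P F ok :
  let: (P', F', ok') := foldl (decomp_step T succs) (P, F, ok) w in
  ok' -> ok /\ eqv (f T) (rl (P ++ F ++ w)) (rl (P' ++ F')).
Proof.
elim: w P F ok => [|y w IH] P F ok.
  by rewrite /= cats0; split=> //; apply: eqv_refl.
have -> : foldl (decomp_step T succs) (P, F, ok) (y :: w) =
  foldl (decomp_step T succs) (decomp_step T succs (P, F, ok) y) w by [].
have := decomp_step_sound P F ok y.
case: (decomp_step T succs (P, F, ok) y) => [[P1 F1] ok1] Hstep.
have := IH P1 F1 ok1; case: (foldl _ _ w) => [[P2 F2] ok2] Hfold hok2.
have [hok1 E12] := Hfold hok2; have [hok E01] := Hstep hok1.
split=> //; apply: eqv_trans E12.
have -> : P ++ F ++ y :: w = (P ++ F ++ [:: y]) ++ w by rewrite -!catA.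
by rewrite [P1 ++ _]catA !(wrelabel_cat _ _ w); apply: eqv_catr.
Qed.

Lemma decomp_sound w :
  let: (P, F, ok) := decomp T succs w in ok -> eqv (f T) (rl w) (rl (P ++ F)).
Proof.
have := decomp_sound_from w [::] [::] true; rewrite /decomp.
by case: (foldl _ _ _) => [[P F] ok] H /H[].
Qed.

Lemma wrelabel_s_word n w : f T.-1 = n -> f T = n.+1 -> valid_word T.-1 w ->
  rl (s_word T.-1 w) = s_word n (rl w).
Proof.
move=> fn fN wv.
have TS : T.-1.+1 = T.
  case: (posnP T) => [T0|/prednK //]; by move: fN; rewrite -fn T0 /=; lia.
rewrite /s_word /wrelabel !wmap_comp.
apply: (eq_in_wmap (P := valid_letter T.-1)) wv => x hx.
rewrite -/(wrelabel f _) wmap_letter1 -fn.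
have fS : (f T.-1).+1 = f T by rewrite fN fn.
case: x hx => [i|i|i j] /= hx; rewrite pos_eqE; try lia;
  case: ifP => _; rewrite ?fS ?TS //.
all: rewrite ?(wrelabel_cat, wrelabel_winv) !wrelabel_C //; lia.
Qed.

Lemma s_word_fibre_relabel n w F w' F' : f T.-1 = n -> f T = n.+1 -> valid_word T.-1 w ->
  s_fibre T succs w = Some F -> rl w = w' -> rl F = F' -> eqv n.+1 (s_word n w') (w' ++ F').
Proof.
move=> fn fN wv; rewrite /s_fibre.
have := decomp_sound (s_word T.-1 w); case: (decomp _ _ _) => [[P F0] ok] H.
case: ifP => // /andP[hok /eqP PE] [<-] <- <-.
by rewrite -fN -wrelabel_s_word // -wrelabel_cat -{2}PE; apply: H.
Qed.

Lemma s_word_rel_relabel n l r l' r' (lr : prel T.-1 l r) : f T.-1 = n -> f T = n.+1 ->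
  (s_fibre T succs l != None) && (s_fibre T succs l == s_fibre T succs r) ->
  rl l = l' -> rl r = r' -> eqv n.+1 l' r' -> eqv n.+1 (s_word n l') (s_word n r').
Proof.
move: lr => /prel_valid/andP[lv rv] fn fN.
case E: (s_fibre T succs l) => [F|] //= /eqP/esym Er hl hr Hlr.
apply: eqv_trans (s_word_fibre_relabel fn fN lv E hl erefl) _.
apply: eqv_sym; apply: eqv_trans (s_word_fibre_relabel fn fN rv Er hr erefl) _.
by apply: eqv_catr; apply: eqv_sym.
Qed.

End Positions.

Lemma s_word_id n w : valid_word n.-1 w -> s_word n w = w.
Proof.
move=> wv; rewrite /s_word -[RHS]wmap_letter.
apply: (eq_in_wmap (P := valid_letter n.-1)) wv => -[i|i|i j] /= hx.
all: rewrite ifN_eq ?C_ne //; lia.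
Qed.

Lemma s_word_fixed_rel n w w' : prel n.-1 w w' -> eqv n.+1 w w' ->
  eqv n.+1 (s_word n w) (s_word n w').
Proof. by move=> /prel_valid/andP[wv wv']; rewrite !s_word_id. Qed.

Definition r5_factor (i j : nat) : word := C i j ++ winv (C i.+1 j).
Definition r5_rhs (i : nat) : word := b i ++ C 1 i ++ winv (a i) ++ winv (b i) ++ winv (a i).

Ltac relabel_eq :=
  rewrite /wrelabel /wmap /r5_factor /r5_rhs /C /=;
  repeat match goal with |- context [if ?c then _ else _] =>
    first [rewrite (_ : c = false); last by lia | rewrite (_ : c = true); last by lia] end;
  reflexivity.

Ltac fibre_by_positions ix succs w F :=
  apply: (@s_word_fibre_relabel ix _ succs _ _ w F);
  [ by rewrite /=; lia | by rewrite /=; lia | by [] | by [] | by [] | by vm_compute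
  | relabel_eq | relabel_eq ].

(* [rel] is a relation constructor applied to the positional bound T.-1 and
   positional indices; its numeric side conditions are closed by isT. *)
Ltac rel_by_positions ix succs rel :=
  let lr := fresh "lr" in
  have lr := rel; do ?[move/(_ isT) in lr];
  apply: (@s_word_rel_relabel ix _ succs _ _ _ _ _ _ lr);
  [ by rewrite /=; lia | by rewrite /=; lia | by [] | by [] | by vm_compute
  | relabel_eq | relabel_eq | apply: eqv_rel ].

Ltac fixed_rel R := apply: s_word_fixed_rel; [apply: R | apply: eqv_rel; apply: R]; lia.

Lemma s_r5_factor n i : 0 < i < n ->
  eqv n.+1 (s_word n (r5_factor i n)) (r5_factor i n ++ r5_factor i n.+1).
Proof.
case/andP=> hi hin; case: (ltngtP i.+1 n) => hin'; try lia.
- fibre_by_positions [:: 0; i; i.+1; n; n.+1] [:: 1; 3] (r5_factor 1 3) (r5_factor 1 4).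
- subst n; fibre_by_positions [:: 0; i; i.+1; i.+2] [:: 1; 2] (r5_factor 1 2) (r5_factor 1 3).
Qed.

Lemma s_r5_rhs n : 0 < n ->
  eqv n.+1 (s_word n (r5_rhs n)) (r5_rhs n ++ r5_rhs n.+1 ++ winv (C n n.+1)).
Proof.
move=> hn; case: (ltngtP 1 n) => hn1; try lia.
- fibre_by_positions [:: 0; 1; n; n.+1] [:: 2] (r5_rhs 2) (r5_rhs 3 ++ winv (C 2 3)).
- subst n; fibre_by_positions [:: 0; 1; 2] [:: 1] (r5_rhs 1) (r5_rhs 2 ++ winv (C 1 2)).
Qed.

Lemma s_word_r5_below n i : 0 < i < n ->
  eqv n.+1 (s_word n (flatten [seq r5_factor i j | j <- iota i.+1 (n - i)]))
           (s_word n (r5_rhs i)).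
Proof.
case/andP=> hi hin.
have R : eqv n.+1 (flatten [seq r5_factor i j | j <- iota i.+1 (n.+1 - i)]) (r5_rhs i).
  by apply: eqv_rel; apply: R5; lia.
have -> : n - i = (n - i).-1 + 1 by lia.
have hS : n.+1 - i = (n - i).-1 + 2 by lia.
have hn : i.+1 + (n - i).-1 = n by lia.
rewrite hS !iotaD hn !map_cat !flatten_cat /= !cats0 in R *.
rewrite /s_word wmap_cat -!/(s_word n _).
rewrite [s_word n (flatten _)]s_word_id; last by apply: valid_word_r5_lhs; lia.
rewrite [s_word n (r5_rhs i)]s_word_id; last first.
  by rewrite /r5_rhs !(valid_word_cat, valid_word_winv, valid_word_C) /=; lia.
by apply: eqv_trans R; apply: eqv_catl; apply: s_r5_factor; lia.
Qed.

Lemma s_word_r5_top n : 0 < n -> eqv n.+1 [::] (s_word n (r5_rhs n)).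
Proof.
move=> hn.
have Rn : eqv n.+1 (C n n.+1) (r5_rhs n).
  have := @R5 n.+1 n; rewrite subSnn /= C_id !cats0 => r.
  by apply/eqv_rel/r; lia.
have Rn1 : eqv n.+1 [::] (r5_rhs n.+1).
  by have := @R5 n.+1 n.+1; rewrite subnn => r; apply/eqv_rel/r; lia.
apply: eqv_sym; apply: eqv_trans (s_r5_rhs hn) _.
apply: eqv_trans (eqv_catr _ (eqv_sym Rn)) _.
by apply: eqv_trans (eqv_catl _ (eqv_catr _ (eqv_sym Rn1))) (eqv_mulV _ _).
Qed.

Lemma s_word_respects_prel n w w' :
  0 < n -> prel n w w' -> eqv n.+1 (s_word n w) (s_word n w').
Proof.
move=> hn; case.
- move=> i j h1 h2 h3; case: (ltngtP j n) => hj; [fixed_rel R1 | lia | subst j].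
  by rel_by_positions [:: 0; i; n; n.+1] (@nil nat) (@R1 2 1 2); apply: R1; lia.
- move=> i j h1 h2 h3; case: (ltngtP j n) => hj; [fixed_rel R2 | lia | subst j].
  case: (ltngtP i.+1 n) => hi; [| lia | subst n].
  + by rel_by_positions [:: 0; i; i.+1; n; n.+1] [:: 1; 3] (@R2 3 1 3); apply: R2; lia.
  + by rel_by_positions [:: 0; i; i.+1; i.+2] [:: 1; 2] (@R2 2 1 2); apply: R2; lia.
- move=> i j k /andP[hi1 hin] hj hjk hk hc; case: (ltngtP k n) => hkn; [| lia | subst k].
  + case: (ltngtP i n) => hi; [fixed_rel R3a | lia | subst i].
    by rel_by_positions [:: 0; j; k; n; n.+1] [:: 3] (@R3a 3 3 1 2); apply: R3a; lia.
  + case: (ltngtP i.+1 j) => hij; [| lia | subst j].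
    * by rel_by_positions [:: 0; i; i.+1; j; n; n.+1] [:: 1; 4] (@R3a 4 1 3 4);
        apply: R3a; lia.
    * by rel_by_positions [:: 0; i; i.+1; n; n.+1] [:: 1; 3] (@R3a 3 1 2 3); apply: R3a; lia.
- move=> i j k hj hji hik hk; case: (ltngtP k n) => hkn; [fixed_rel R3b | lia | subst k].
  case: (ltngtP j i) => hji'; [| lia | subst j].
  + case: (ltngtP i.+1 n) => hin; [| lia | subst n].
    * by rel_by_positions [:: 0; j; i; i.+1; n; n.+1] [:: 2; 4] (@R3b 4 2 1 4);
        apply: R3b; lia.
    * by rel_by_positions [:: 0; j; i; i.+1; i.+2] [:: 2; 3] (@R3b 3 2 1 3);
        apply: R3b; lia.
  + case: (ltngtP i.+1 n) => hin; [| lia | subst n].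
    * by rel_by_positions [:: 0; i; i.+1; n; n.+1] [:: 1; 3] (@R3b 3 1 1 3); apply: R3b; lia.
    * by rel_by_positions [:: 0; i; i.+1; i.+2] [:: 1; 2] (@R3b 2 1 1 2); apply: R3b; lia.
- move=> i l j k hi hil hj hjk hk hc; case: (ltngtP k n) => hkn; [fixed_rel R4a | lia | subst k].
  case: (ltnP l j) => hlj.
  + by rel_by_positions [:: 0; i; l; j; n; n.+1] [:: 4] (@R4a 4 1 2 3 4); apply: R4a; lia.
  + case: (ltngtP j i) => hji; [| lia | subst j].
    * by rel_by_positions [:: 0; j; i; l; n; n.+1] [:: 4] (@R4a 4 2 3 1 4);
        apply: R4a; lia.
    * by rel_by_positions [:: 0; i; l; n; n.+1] [:: 3] (@R4a 3 1 2 1 3); apply: R4a; lia.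
- move=> i l j k hi hij hjl hlk hk; case: (ltngtP k n) => hkn; [fixed_rel R4b | lia | subst k].
  case: (ltngtP j l) => hjl'; [| lia | subst j].
  + case: (ltngtP l.+1 n) => hln; [| lia | subst n].
    * by rel_by_positions [:: 0; i; j; l; l.+1; n; n.+1] [:: 3; 5] (@R4b 5 1 3 2 5);
        apply: R4b; lia.
    * by rel_by_positions [:: 0; i; j; l; l.+1; l.+2] [:: 3; 4] (@R4b 4 1 3 2 4);
        apply: R4b; lia.
  + case: (ltngtP l.+1 n) => hln; [| lia | subst n].
    * by rel_by_positions [:: 0; i; l; l.+1; n; n.+1] [:: 2; 4] (@R4b 4 1 2 2 4);
        apply: R4b; lia.
    * by rel_by_positions [:: 0; i; l; l.+1; l.+2] [:: 2; 3] (@R4b 3 1 2 2 3);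
        apply: R4b; lia.
- move=> i /andP[hi hin]; case: (ltngtP i n) => hin'; [| lia | subst i].
  + by apply: s_word_r5_below; lia.
  + by rewrite subnn; apply: s_word_r5_top.
- move=> i j h1 h2 h3; case: (ltngtP j n) => hj; [fixed_rel R6 | lia | subst j].
  case: (ltngtP i.+1 n) => hi; [| lia | subst n].
  + by rel_by_positions [:: 0; i; i.+1; n; n.+1] [:: 1; 3] (@R6 3 1 3); apply: R6; lia.
  + by rel_by_positions [:: 0; i; i.+1; i.+2] [:: 1; 2] (@R6 2 1 2); apply: R6; lia.
- move=> i j h1 h2 h3; case: (ltngtP j n) => hj; [fixed_rel R7 | lia | subst j].
  case: (ltngtP i.+1 n) => hi; [| lia | subst n].
  + by rel_by_positions [:: 0; i; i.+1; n; n.+1] [:: 1; 3] (@R7 3 1 3); apply: R7; lia.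
  + by rel_by_positions [:: 0; i; i.+1; i.+2] [:: 1; 2] (@R7 2 1 2); apply: R7; lia.
- move=> i j k /andP[hi1 hin] hj hjk hk hc; case: (ltngtP k n) => hkn; [| lia | subst k].
  + case: (ltngtP i n) => hi; [fixed_rel R8a | lia | subst i].
    by rel_by_positions [:: 0; j; k; n; n.+1] [:: 3] (@R8a 3 3 1 2); apply: R8a; lia.
  + case: (ltngtP i.+1 j) => hij; [| lia | subst j].
    * by rel_by_positions [:: 0; i; i.+1; j; n; n.+1] [:: 1; 4] (@R8a 4 1 3 4);
        apply: R8a; lia.
    * by rel_by_positions [:: 0; i; i.+1; n; n.+1] [:: 1; 3] (@R8a 3 1 2 3); apply: R8a; lia.
- move=> i j k hj hji hik hk; case: (ltngtP k n) => hkn; [fixed_rel R8b | lia | subst k].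
  case: (ltngtP j i) => hji'; [| lia | subst j].
  + case: (ltngtP i.+1 n) => hin; [| lia | subst n].
    * by rel_by_positions [:: 0; j; i; i.+1; n; n.+1] [:: 2; 4] (@R8b 4 2 1 4);
        apply: R8b; lia.
    * by rel_by_positions [:: 0; j; i; i.+1; i.+2] [:: 2; 3] (@R8b 3 2 1 3);
        apply: R8b; lia.
  + case: (ltngtP i.+1 n) => hin; [| lia | subst n].
    * by rel_by_positions [:: 0; i; i.+1; n; n.+1] [:: 1; 3] (@R8b 3 1 1 3); apply: R8b; lia.
    * by rel_by_positions [:: 0; i; i.+1; i.+2] [:: 1; 2] (@R8b 2 1 1 2); apply: R8b; lia.
Qed.

Theorem proposition5p1 (n : nat) : 1 <= n ->
  (forall w w' : word, valid_word n w -> valid_word n w' ->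
     eqv n w w' -> eqv n.+1 (s_word n w) (s_word n w')) /\
  (forall w : word, valid_word n w -> eqv n (p_word n (s_word n w)) w).
Proof.
move=> hn; split=> [w w' _ _ | w wv].
- exact: eqv_wmap (fun w w' => s_word_respects_prel hn) w w'.
- by rewrite p_word_s_word //; apply: eqv_refl.
Qed.
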